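(* Let $D,\widetilde D,K,\widetilde K$ be nonempty sets, $\emptyset\ne F\subseteq\mathcal{F}(D,K)$, $\emptyset\ne\widetilde F\subseteq\mathcal{F}(\widetilde D,\widetilde K)$, and let $\Gamma:F\to\widetilde F$ be a mapping for which there exist $\kappa,m^*\in\mathbb{N}$ and mappings $\eta_j:\widetilde D\to D$ ($j=0,\dots,\kappa-1$), $\beta:K\to\mathbb{Z}[0,2^{m^*})$, $\rho:\widetilde D\times\mathbb{Z}[0,2^{m^*})^\kappa\to\widetilde K$ such that for all $f\in F$, $s\in\widetilde D$, $$(\Gamma(f))(s)=\rho\big(s,\beta(f(\eta_0(s))),\dots,\beta(f(\eta_{\kappa-1}(s)))\big).$$ Then for each quantum query $\widetilde Q$ on $\widetilde F$ there is a quantum algorithm without measurement $B$ on $F$ such that $n_q(B)=2\kappa$, $m:=m(B)>\widetilde m:=m(\widetilde Q)$, and for all $f\in F$ and $x\in\mathbb{Z}[0,2^{\widetilde m})$, $$(\widetilde Q_{\Gamma(f)}|x\rangle)|0\rangle_{m-\widetilde m}=B_f|x\rangle|0\rangle_{m-\widetilde m},$$ where $|0\rangle_{m-\widetilde m}$ is the zero basis state of the last $m-\widetilde m$ qubits (so $H_m=H_{\widetilde m}\otimes H_{m-\widetilde m}$).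
   Context: For nonempty sets $D',K'$, $\mathcal{F}(D',K')$ is the set of all functions $D'\to K'$; $\mathbb{Z}[0,N)=\{0,\dots,N-1\}$. $H_m=(\mathbb{C}^2)^{\otimes m}$ has canonical basis $|i\rangle$, $i\in\mathbb{Z}[0,2^m)$, where $|i\rangle=e_{j_0}\otimes\cdots\otimes e_{j_{m-1}}$ with $i=\sum_k j_k2^{m-1-k}$. For nonempty $F\subseteq\mathcal{F}(D',K')$, a quantum query on $F$ is a tuple $Q=(m,m',m'',Z,\tau,\beta)$ with $m,m',m''\in\mathbb{N}$, $m'+m''\le m$, $\emptyset\ne Z\subseteq\mathbb{Z}[0,2^{m'})$, $\tau:Z\to D'$, $\beta:K'\to\mathbb{Z}[0,2^{m''})$; $m(Q)=m$. For $f\in F$, $Q_f$ is the unitary on $H_m=H_{m'}\otimes H_{m''}\otimes H_{m-m'-m''}$ with $Q_f|i\rangle|x\rangle|y\rangle=|i\rangle|x\oplus\beta(f(\tau(i)))\rangle|y\rangle$ if $i\in Z$ and $=|i\rangle|x\rangle|y\rangle$ otherwise ($\oplus$ = addition mod $2^{m''}$). A quantum algorithm on $F$ with no measurement is $B=(Q,(U_j)_{j=0}^n)$, $n\in\mathbb{N}_0$, $Q$ a quantum query on $F$, $U_j$ unitary operators on $H_{m(Q)}$; $B_f=U_nQ_fU_{n-1}\cdots U_1Q_fU_0$, $n_q(B)=n$ (number of queries), $m(B)=m(Q)$. *)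

From HB Require Import structures.
From mathcomp Require Import all_boot all_order all_algebra.
Set Implicit Arguments. Unset Strict Implicit. Unset Printing Implicit Defensive.
Import Order.TTheory GRing.Theory Num.Theory.
Local Open Scope ring_scope.

Section Quantum.
Variable C : numClosedFieldType.

(* canonical basis vector |i> of H with dim n (n = 2^m); zero if i >= n *)
Definition ket (n i : nat) : 'cV[C]_n := \col_(r < n) ((val r == i)%:R).

Definition unitary n (U : 'M[C]_n) : Prop :=
  U *m (map_mx Num.conj U)^T = 1%:M.

(* quantum query (m, m', m'', Z, tau, beta) on functions D' -> K';
   Z is a predicate on nat, tau is defined (at least) on Z, beta : K' -> nat *)
Record query (D' K' : Type) := Query {
  qm : nat; qm1 : nat; qm2 : nat;
  qZ : pred nat; qtau : nat -> D'; qbeta : K' -> nat }.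

Definition query_valid (D' K' : Type) (Q : query D' K') : Prop :=
  (0 < qm1 Q)%N /\ (0 < qm2 Q)%N /\ (qm1 Q + qm2 Q <= qm Q)%N /\
  (forall i, qZ Q i -> i < 2 ^ qm1 Q)%N /\
  (exists i, qZ Q i) /\
  (forall k, qbeta Q k < 2 ^ qm2 Q)%N.

(* action of Q_f on basis indices: |i>|x>|y> |-> |i>|x (+) beta(f(tau i))>|y> *)
Definition query_idx (D' K' : Type) (Q : query D' K') (f : D' -> K') (n : nat) : nat :=
  let r3 := (qm Q - qm1 Q - qm2 Q)%N in
  let i := (n %/ 2 ^ (qm Q - qm1 Q))%N in
  let x := ((n %/ 2 ^ r3) %% 2 ^ qm2 Q)%N in
  let y := (n %% 2 ^ r3)%N in
  if qZ Q i then
    (i * 2 ^ (qm Q - qm1 Q) + ((x + qbeta Q (f (qtau Q i))) %% 2 ^ qm2 Q) * 2 ^ r3 + y)%N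
  else n.

Definition query_op (D' K' : Type) (Q : query D' K') (f : D' -> K') : 'M[C]_(2 ^ qm Q) :=
  \matrix_(r, c) ((val r == query_idx Q f (val c))%:R).

Record qalg (D' K' : Type) := QAlg {
  aQ : query D' K'; an : nat; aU : nat -> 'M[C]_(2 ^ qm aQ) }.

Definition qalg_valid (D' K' : Type) (B : qalg D' K') : Prop :=
  query_valid (aQ B) /\ (forall j, (j <= an B)%N -> unitary (aU B j)).

Definition n_q (D' K' : Type) (B : qalg D' K') : nat := an B.
Definition m_alg (D' K' : Type) (B : qalg D' K') : nat := qm (aQ B).

Fixpoint qalg_run (D' K' : Type) (B : qalg D' K') (f : D' -> K') (j : nat)
  : 'M[C]_(2 ^ qm (aQ B)) :=
  match j with
  | 0 => aU B 0
  | j'.+1 => aU B j'.+1 *m query_op (aQ B) f *m qalg_run B f j'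
  end.

Definition qalg_op (D' K' : Type) (B : qalg D' K') (f : D' -> K') : 'M[C]_(2 ^ m_alg B) :=
  qalg_run B f (an B).

(* v |0>_{m - mt} : the linear extension of |i> |-> |i>|0> = |i * 2^(m-mt)> *)
Definition pad0 (mt m : nat) (v : 'cV[C]_(2 ^ mt)) : 'cV[C]_(2 ^ m) :=
  \sum_(i < 2 ^ mt) v i 0 *: ket (2 ^ m) (i * 2 ^ (m - mt))%N.

End Quantum.

(* Every unitary of the simulating algorithm, and its query, is a permutation
   matrix, so it suffices to follow basis states.  Next to the register of the
   query Q~ the algorithm keeps a kappa-qubit counter c and an
   (m* kappa)-qubit accumulator A; its own query adds beta (f (eta_c s)) to A,
   where s is the point Q~ would query on the current basis state.  Alternating
   kappa such queries with "shift A by m* bits, increment c" is a permutation P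
   that writes the values beta (f (eta_j s)), j < kappa, into A as base-2^m*
   digits.  A permutation G then applies Q~ for the function
   s |-> rho (s, digits of A), which agrees with Gamma f at s.  Since Q~ leaves
   unchanged the part of its register that determines s, P^-1 erases c and A
   again, and P^-1 costs only kappa queries because negating A conjugates the
   query to its inverse.  Hence B_f = P G P^-1 uses 2 kappa queries. *)

From mathcomp Require Import all_boot all_order all_algebra all_fingroup zify.
Import GRing.Theory.

Set Implicit Arguments.
Unset Strict Implicit.

Lemma divnMD_small a b Q : b < Q -> (a * Q + b) %/ Q = a.
Proof. by move=> hb; rewrite divnMDl ?divn_small ?addn0 //; lia. Qed.

Lemma modnMD_small a b Q : b < Q -> (a * Q + b) %% Q = b.
Proof. by move=> hb; rewrite modnMDl modn_small. Qed.

Definition permutes N (g : nat -> nat) : Prop :=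
  (forall n, n < N -> g n < N) /\
  (forall n n', n < N -> n' < N -> g n = g n' -> n = n').

Lemma eq_permutes N g g' : g =1 g' -> permutes N g -> permutes N g'.
Proof. by move=> e [hlt hinj]; split=> [n|n n']; rewrite -!e; [apply: hlt | apply: hinj]. Qed.

Lemma permutes_can N g g' :
  (forall n, n < N -> g n < N) -> (forall n, n < N -> g' (g n) = n) ->
  permutes N g.
Proof. by move=> hg hK; split=> // n n' hn hn' e; rewrite -(hK n) // e hK. Qed.

Lemma permutes_addmod N v : permutes N (fun n => (n + v) %% N).
Proof.
split=> [n hn | n n' hn hn' /eqP]; first by rewrite ltn_mod; lia.
by rewrite eqn_modDr !modn_small // => /eqP.
Qed.

Lemma permutes_negmod N : permutes N (fun n => (N - n) %% N).
Proof.
apply: (permutes_can (g' := fun n => (N - n) %% N)) => [n hn | n hn].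
  by rewrite ltn_mod; lia.
case: n hn => [|n] hn; first by rewrite subn0 modnn subn0 modnn.
by rewrite (modn_small (m := N - n.+1)) ?subKn ?modn_small //; lia.
Qed.

Lemma subn_modn_addn W x : x < W -> (W - x) %% W + x = 0 %[mod W].
Proof. by move=> hx; rewrite modnDml subnK ?modnn ?mod0n //; lia. Qed.

Lemma negmod_addmodK W a b : a < W ->
  (W - ((W - (a + b) %% W) %% W + b) %% W) %% W = a.
Proof.
move=> ha; have hW : 0 < W by lia.
set y := (a + b) %% W; set t := (W - y) %% W.
have ey : t + y = 0 %[mod W] by apply: subn_modn_addn; rewrite ltn_mod.
have ez : (W - (t + b) %% W) %% W + (t + b) = 0 %[mod W].
  by rewrite -modnDmr subn_modn_addn ?ltn_mod.
rewrite -(modn_small ha) -modn_mod; apply/eqP; rewrite -(eqn_modDr b).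
rewrite -(eqn_modDr t) -addnA (addnC b t) ez -(eqn_modDr y) add0n -addnA.
by rewrite -modnDmr ey mod0n addn0 modn_mod.
Qed.

Lemma permutes_swap R Q : permutes (R * Q) (fun n => n %% Q * R + n %/ Q).
Proof.
apply: (permutes_can (g' := fun n => n %% R * Q + n %/ R)) => n hn.
  have hQ : n %% Q < Q by rewrite ltn_mod; lia.
  have hR : n %/ Q < R by rewrite ltn_divLR; lia.
  nia.
have hR : n %/ Q < R by rewrite ltn_divLR; lia.
by rewrite modnMD_small // divnMD_small ?ltn_mod 1?addnC -?divn_eq //; lia.
Qed.

Definition map_low Q (h : nat -> nat -> nat) n := n %/ Q * Q + h (n %/ Q) (n %% Q).
Definition map_high Q (h : nat -> nat -> nat) n := h (n %% Q) (n %/ Q) * Q + n %% Q.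

Lemma map_lowE Q h a b : b < Q -> map_low Q h (a * Q + b) = a * Q + h a b.
Proof. by move=> hb; rewrite /map_low divnMD_small ?modnMD_small. Qed.

Lemma map_highE Q h a b : b < Q -> map_high Q h (a * Q + b) = h b a * Q + b.
Proof. by move=> hb; rewrite /map_high divnMD_small ?modnMD_small. Qed.

Lemma map_low_div Q h n : h (n %/ Q) (n %% Q) < Q -> map_low Q h n %/ Q = n %/ Q.
Proof. exact: divnMD_small. Qed.

Lemma permutes_map_low R Q h :
  (forall a, a < R -> permutes Q (h a)) -> permutes (R * Q) (map_low Q h).
Proof.
move=> hh; have digits n : n < R * Q -> n %/ Q < R /\ n %% Q < Q.
  by move=> hn; rewrite ltn_divLR ?ltn_mod; lia.
split=> [n /digits [ha hb] | n n' /digits [ha hb] /digits [ha' hb']].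
  have [hlt _] := hh _ ha; have := hlt _ hb; rewrite /map_low; nia.
have [hlt hinj] := hh _ ha; have [hlt' _] := hh _ ha'.
rewrite /map_low => e.
have ea : n %/ Q = n' %/ Q.
  by move: (congr1 (divn^~ Q) e); rewrite !divnMD_small ?hlt ?hlt'.
move: (congr1 (modn^~ Q) e); rewrite !modnMD_small ?hlt ?hlt' // ea.
have [_ hinj'] := hh _ ha' => /hinj' eb.
by rewrite (divn_eq n Q) (divn_eq n' Q) ea eb.
Qed.

Lemma permutes_map_high R Q h :
  (forall b, b < Q -> permutes R (h b)) -> permutes (R * Q) (map_high Q h).
Proof.
move=> hh; have digits n : n < R * Q -> n %/ Q < R /\ n %% Q < Q.
  by move=> hn; rewrite ltn_divLR ?ltn_mod; lia.
split=> [n /digits [ha hb] | n n' /digits [ha hb] /digits [ha' hb']].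
  have [hlt _] := hh _ hb; have := hlt _ ha; rewrite /map_high; nia.
have [hlt hinj] := hh _ hb; have [hlt' _] := hh _ hb'.
rewrite /map_high => e.
have eb : n %% Q = n' %% Q by move: (congr1 (modn^~ Q) e); rewrite !modnMD_small.
move: (congr1 (divn^~ Q) e); rewrite !divnMD_small // eb.
have [_ hinj'] := hh _ hb' => /hinj' ea.
by rewrite (divn_eq n Q) (divn_eq n' Q) ea ?eb.
Qed.

Section NatAction.
Variable N : nat.
Implicit Types (s t : {perm 'I_N}) (n : nat).

Definition natact s n : nat := if insub n is Some i then val (s i) else n.

Lemma natactE s (i : 'I_N) : natact s (val i) = val (s i).
Proof. by rewrite /natact valK. Qed.

Lemma natact_out s n : N <= n -> natact s n = n.
Proof. by rewrite /natact => hn; rewrite insubN // -leqNgt. Qed.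

Lemma natact1 n : natact 1 n = n.
Proof. by rewrite /natact; case: insubP => // i _ <-; rewrite perm1. Qed.

Lemma natactM s t n : natact (s * t) n = natact t (natact s n).
Proof.
have [hn | hn] := ltnP n N; last by rewrite !natact_out.
by rewrite -[n]/(val (Ordinal hn)) !natactE permM.
Qed.

Lemma natactK s : cancel (natact s) (natact s^-1).
Proof. by move=> n; rewrite -natactM mulgV natact1. Qed.

Lemma natact_eq s t : (forall n, n < N -> natact s n = natact t n) -> s = t.
Proof.
move=> e; apply/permP => i; apply: val_inj.
by rewrite -!natactE e ?ltn_ord.
Qed.

Lemma permutes_perm g : permutes N g -> {s | forall n, n < N -> natact s n = g n}.
Proof.
case=> hlt hinj.
pose f (i : 'I_N) : 'I_N := Ordinal (hlt _ (ltn_ord i)).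
have f_inj : injective f by move=> i j /(congr1 val) /hinj e; apply/val_inj/e.
by exists (perm f_inj) => n hn; rewrite -[n]/(val (Ordinal hn)) natactE permE.
Qed.

Definition perm_of g (hg : permutes N g) : {perm 'I_N} := sval (permutes_perm hg).

Lemma perm_ofE g (hg : permutes N g) n : n < N -> natact (perm_of hg) n = g n.
Proof. exact: (svalP (permutes_perm hg) n). Qed.

End NatAction.

Section BasisPermutations.
Variables (C : numClosedFieldType) (N : nat).
Implicit Type s : {perm 'I_N}.
Local Open Scope ring_scope.

Lemma perm_mx_unitary s : unitary (perm_mx s : 'M[C]_N).
Proof. by rewrite /unitary map_perm_mx tr_perm_mx -perm_mxM mulgV perm_mx1. Qed.

Lemma perm_mxV_ket s n : (n < N)%N ->
  perm_mx s^-1 *m ket C N n = ket C N (natact s n).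
Proof.
move=> hn; rewrite -row_permE -[n]/(val (Ordinal hn)) natactE.
apply/matrixP => r c; rewrite !mxE !val_eqE.
by rewrite (can2_eq (permKV s) (permK s)).
Qed.

Lemma perm_mxV_of_map s (g : nat -> nat) :
  (forall n, (n < N)%N -> natact s n = g n) ->
  \matrix_(r, c) ((val r == g (val c))%:R) = perm_mx s^-1 :> 'M[C]_N.
Proof.
move=> hs; apply/matrixP => r c; rewrite !mxE -hs ?ltn_ord // natactE !val_eqE.
by rewrite (can2_eq (permKV s) (permK s)).
Qed.

End BasisPermutations.

Lemma pad0_ket (C : numClosedFieldType) mt m y : y < 2 ^ mt ->
  pad0 m (ket C (2 ^ mt) y) = ket C (2 ^ m) (y * 2 ^ (m - mt)).
Proof.
move=> hy; rewrite /pad0 (bigD1 (Ordinal hy)) //= big1 ?addr0.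
  by rewrite mxE eqxx scale1r.
move=> i /negbTE hi; rewrite mxE.
by rewrite -[y]/(val (Ordinal hy)) val_eqE hi scale0r.
Qed.

Section Horner.
Variables (B : nat) (d : nat -> nat).
Hypothesis d_lt : forall i, d i < B.

Fixpoint horner j := if j is j'.+1 then horner j' * B + d j else d 0.

Lemma horner_lt j : horner j < B ^ j.+1.
Proof.
elim: j => [|j IH] /=; first by rewrite expn1.
by rewrite expnSr; have := d_lt j.+1; nia.
Qed.

Lemma horner_digit i j : i <= j -> horner j %/ B ^ (j - i) %% B = d i.
Proof.
elim: j => [|j IH] hij.
  by case: i hij => // _; rewrite subnn expn0 divn1 modn_small ?d_lt.
have [-> | hi] := eqVneq i j.+1; first by rewrite subnn divn1 /= modnMD_small.
have hij' : i <= j by rewrite -ltnS ltn_neqAle hi.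
by rewrite subSn // expnS divnMA divnMD_small ?IH.
Qed.

End Horner.

Section QueryIndex.
Variables (D' K' : Type) (Q : query D' K').
Hypothesis hQ : query_valid Q.

Local Notation L := (2 ^ (qm Q - qm1 Q)).

Lemma query_idx_ext f g n :
  f (qtau Q (n %/ L)) = g (qtau Q (n %/ L)) -> query_idx Q f n = query_idx Q g n.
Proof. by rewrite /query_idx /= => ->. Qed.

Let L_split : L = 2 ^ qm2 Q * 2 ^ (qm Q - qm1 Q - qm2 Q).
Proof. by case: hQ => _ [_ [hm _]]; rewrite -expnD; congr (2 ^ _); lia. Qed.

Definition query_low_idx f i : nat -> nat :=
  if qZ Q i then map_high (2 ^ (qm Q - qm1 Q - qm2 Q))
                   (fun _ x => (x + qbeta Q (f (qtau Q i))) %% 2 ^ qm2 Q)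
  else id.

Lemma query_idxE f : query_idx Q f =1 map_low L (query_low_idx f).
Proof.
move=> n; rewrite /query_idx /map_low /query_low_idx /=.
case: ifP => _; last exact: divn_eq.
have -> : n %% 2 ^ (qm Q - qm1 Q - qm2 Q) = n %% L %% 2 ^ (qm Q - qm1 Q - qm2 Q).
  by rewrite modn_dvdm // L_split dvdn_mull.
by rewrite /map_high modn_divl -L_split addnA.
Qed.

Lemma permutes_query_low_idx f i : permutes L (query_low_idx f i).
Proof.
rewrite /query_low_idx; case: ifP => _; last by split.
by rewrite L_split; apply: permutes_map_high => _ _; apply: permutes_addmod.
Qed.

Lemma query_idx_div f n : query_idx Q f n %/ L = n %/ L.
Proof.
have [hlt _] := permutes_query_low_idx f (n %/ L).
by rewrite query_idxE map_low_div // hlt // ltn_mod expn_gt0.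
Qed.

Lemma permutes_query_idx f : permutes (2 ^ qm Q) (query_idx Q f).
Proof.
apply: (eq_permutes (g := map_low L (query_low_idx f))) => [n|].
  by rewrite query_idxE.
have -> : 2 ^ qm Q = 2 ^ qm1 Q * L.
  by case: hQ => _ [_ [hm _]]; rewrite -expnD; congr (2 ^ _); lia.
by apply: permutes_map_low => i _; apply: permutes_query_low_idx.
Qed.

Definition query_perm f := perm_of (permutes_query_idx f).

Lemma query_permE f n : n < 2 ^ qm Q -> natact (query_perm f) n = query_idx Q f n.
Proof. exact: perm_ofE. Qed.

End QueryIndex.

Section ComputeUncompute.
Variables (gT : finGroupType) (kappa : nat) (q r g v : gT).
Local Open Scope group_scope.
Hypotheses (hkappa : 0 < kappa) (vqv : v * q * v = q^-1).

Fixpoint interleave (u : nat -> gT) j : gT :=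
  if j is j'.+1 then interleave u j' * q * u j else u 0.

Definition compute_uncompute j : gT :=
  if j == 0 then 1
  else if j < kappa then r
  else if j == kappa then g * v
  else if j < 2 * kappa then v * r^-1 * v
  else v.

Local Notation P := ((q * r) ^+ kappa.-1 * q).

Lemma interleave_compute j : j < kappa -> interleave compute_uncompute j = (q * r) ^+ j.
Proof.
elim: j => [|j IH] hj //=; rewrite IH ?(ltnW hj) // expgSr mulgA.
by rewrite /compute_uncompute hj.
Qed.

Lemma interleave_uncompute t : t < kappa ->
  interleave compute_uncompute (kappa + t) = P * g * v * (q * (v * r^-1 * v)) ^+ t.
Proof.
elim: t => [|t IH] ht.
  rewrite addn0 -{1}(prednK hkappa) /= interleave_compute ?prednK ?ltnSn //.
  by rewrite /compute_uncompute ltnn eqxx; case: kappa hkappa => // k _; rewrite !mulgA mulg1.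
rewrite addnS /= IH ?(ltnW ht) // expgSr !mulgA /compute_uncompute.
have -> : ((kappa + t).+1 < kappa) = false by lia.
have -> : ((kappa + t).+1 == kappa) = false by lia.
have -> : ((kappa + t).+1 == 0) = false by lia.
have -> : (kappa + t).+1 < 2 * kappa by lia.
by rewrite !mulgA.
Qed.

Lemma uncomputeE k : v * (q * (v * r^-1 * v)) ^+ k * q * v = ((q * r) ^+ k * q)^-1.
Proof.
elim: k => [|k IH]; first by rewrite expg0 mulg1 vqv mul1g.
rewrite expgSr expgS.
have -> : v * ((q * (v * r^-1 * v)) ^+ k * (q * (v * r^-1 * v))) * q * v =
          (v * (q * (v * r^-1 * v)) ^+ k * q * v) * r^-1 * (v * q * v) by rewrite !mulgA.
by rewrite IH vqv !invMg !mulgA.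
Qed.

Lemma interleave_compute_uncompute :
  interleave compute_uncompute (2 * kappa)%N = P * g * P^-1.
Proof.
have e2k : (2 * kappa = (kappa + kappa.-1).+1)%N by lia.
rewrite e2k /= interleave_uncompute ?prednK ?ltnSn // -uncomputeE !mulgA -e2k.
rewrite /compute_uncompute ltnn; have -> : (2 * kappa == 0)%N = false by lia.
have -> : (2 * kappa < kappa)%N = false by lia.
by have -> : (2 * kappa == kappa)%N = false by lia.
Qed.

End ComputeUncompute.

Section PermutationAlgorithms.
Variables (C : numClosedFieldType) (D' K' : Type) (Q : query D' K').
Hypothesis hQ : query_valid Q.
Local Open Scope ring_scope.

Lemma query_op_perm f : query_op C Q f = perm_mx (query_perm hQ f)^-1.
Proof. exact/perm_mxV_of_map/query_permE. Qed.

Definition perm_qalg (u : nat -> {perm 'I_(2 ^ qm Q)}) n : qalg C D' K' :=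
  @QAlg C D' K' Q n (fun j => perm_mx (u j)^-1).

Lemma perm_qalg_valid u n : qalg_valid (perm_qalg u n).
Proof. by split=> // j _; apply: perm_mx_unitary. Qed.

Lemma qalg_run_perm u n f j :
  qalg_run (perm_qalg u n) f j = perm_mx (interleave (query_perm hQ f) u j)^-1.
Proof.
elim: j => [|j IH] //=.
by rewrite IH query_op_perm -!perm_mxM !invMg mulgA.
Qed.

End PermutationAlgorithms.

Section Construction.
Variables (C : numClosedFieldType) (D Dt K Kt : Type) (kappa mstar : nat).
Hypotheses (hkappa : 0 < kappa) (hmstar : 0 < mstar).
Variables (eta : 'I_kappa -> Dt -> D) (beta : K -> nat) (rho : Dt -> kappa.-tuple nat -> Kt).
Hypothesis beta_lt : forall k, beta k < 2 ^ mstar.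
Variable Qt : query Dt Kt.
Hypothesis hQt : query_valid Qt.

Local Notation Mt := (qm Qt).
Local Notation W := (2 ^ (mstar * kappa)).
Local Notation K1 := (mstar * kappa.-1).

Definition queried_point x : Dt := qtau Qt (x %/ 2 ^ (qm Qt - qm1 Qt)).

Lemma queried_point_query_idx g x : queried_point (query_idx Qt g x) = queried_point x.
Proof. by rewrite /queried_point query_idx_div. Qed.

Definition ord_of c : 'I_kappa := insubd (Ordinal hkappa) c.

Definition oracle_tau i : D := eta (ord_of (i %% 2 ^ kappa)) (queried_point (i %/ 2 ^ kappa)).

Definition oracle_query : query D K :=
  Query (Mt + kappa + mstar * kappa) (Mt + kappa) (mstar * kappa)
        (fun i => i < 2 ^ (Mt + kappa)) oracle_tau beta.

Local Notation dim := (2 ^ qm oracle_query).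

Lemma oracle_query_valid : query_valid oracle_query.
Proof.
have [m1_gt0 _] := hQt.
do !split=> //=; [lia | lia | by exists 0; rewrite expn_gt0 |].
by move=> k; apply: leq_trans (beta_lt k) _; rewrite leq_exp2l //; nia.
Qed.

Lemma dim_registers : dim = 2 ^ Mt * 2 ^ kappa * W.
Proof. by rewrite /= !expnD. Qed.

Lemma register_lt hi A : hi < 2 ^ (Mt + kappa) -> A < W -> hi * W + A < dim.
Proof. by rewrite dim_registers -expnD => hhi hA; nia. Qed.

(* The basis state |x>|c>|A>: register of Q~, counter, accumulator. *)
Definition state x c A := (x * 2 ^ kappa + c) * W + A.

Lemma state_lt x c A : x < 2 ^ Mt -> c < 2 ^ kappa -> A < W -> state x c A < dim.
Proof. by move=> hx hc hA; apply: register_lt; rewrite // expnD; nia. Qed.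

Lemma state_x00 x : state x 0 0 = x * 2 ^ (qm oracle_query - Mt).
Proof. by rewrite /state !addn0 -mulnA -expnD; congr (_ * 2 ^ _); rewrite /=; lia. Qed.

Lemma counter_lt i : i < kappa -> i < 2 ^ kappa.
Proof. by move/ltn_trans; apply; apply: ltn_expl. Qed.

Definition digit (f : D -> K) s c := beta (f (eta (ord_of c) s)).

Lemma digit_lt f s c : digit f s c < 2 ^ mstar.
Proof. exact: beta_lt. Qed.

Local Notation acc f s j := (horner (2 ^ mstar) (digit f s) j).

Lemma acc_lt f s j : acc f s j < 2 ^ (mstar * j.+1).
Proof. by rewrite expnM; apply/horner_lt/digit_lt. Qed.

Lemma acc_lt_W f s i : i < kappa -> acc f s i < W.
Proof. by move=> hi; apply: leq_trans (acc_lt _ _ _) _; rewrite leq_exp2l //; nia. Qed.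

Definition decode A : kappa.-tuple nat :=
  [tuple A %/ (2 ^ mstar) ^ (kappa.-1 - j) %% 2 ^ mstar | j < kappa].

Lemma decode_acc f s :
  decode (acc f s kappa.-1) = [tuple beta (f (eta j s)) | j < kappa].
Proof.
apply: eq_from_tnth => j; rewrite !tnth_mktuple (horner_digit (digit_lt f s)).
  by rewrite /digit /ord_of valKd.
by rewrite -ltnS prednK.
Qed.

Definition decoded_fun A : Dt -> Kt := fun s => rho s (decode A).

Local Notation oracle f := (query_perm oracle_query_valid f).

Lemma oracle_register f hi A : hi < 2 ^ (Mt + kappa) -> A < W ->
  natact (oracle f) (hi * W + A) = hi * W + (A + beta (f (oracle_tau hi))) %% W.
Proof.
move=> hhi hA; rewrite query_permE ?register_lt // /query_idx /=.
have -> : Mt + kappa + mstar * kappa - (Mt + kappa) = mstar * kappa by lia.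
by rewrite subnn expn0 divn1 modn1 muln1 addn0 divnMD_small // hhi modnMD_small.
Qed.

Lemma oracle_state f x c A : x < 2 ^ Mt -> c < 2 ^ kappa -> A < W ->
  natact (oracle f) (state x c A) = state x c ((A + digit f (queried_point x) c) %% W).
Proof.
move=> hx hc hA; rewrite oracle_register // ?expnD; last by nia.
by rewrite /oracle_tau divnMD_small ?modnMD_small.
Qed.

Lemma permutes_neg : permutes dim (map_low W (fun _ A => (W - A) %% W)).
Proof.
by rewrite dim_registers; apply: permutes_map_low => _ _; apply: permutes_negmod.
Qed.

Lemma permutes_rot :
  permutes dim (map_low W (fun _ A => A %% 2 ^ K1 * 2 ^ mstar + A %/ 2 ^ K1)).
Proof.
rewrite dim_registers; apply: permutes_map_low => _ _.
have -> : W = 2 ^ mstar * 2 ^ K1 by rewrite -expnD -mulnS prednK.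
exact: permutes_swap.
Qed.

Lemma permutes_inc :
  permutes dim (map_high W (fun _ => map_low (2 ^ kappa) (fun _ c => (c + 1) %% 2 ^ kappa))).
Proof.
rewrite dim_registers; apply: permutes_map_high => _ _.
by apply: permutes_map_low => _ _; apply: permutes_addmod.
Qed.

Lemma permutes_apply : permutes dim
  (map_high W (fun A => map_high (2 ^ kappa) (fun _ => query_idx Qt (decoded_fun A)))).
Proof.
rewrite dim_registers; apply: permutes_map_high => A _.
by apply: permutes_map_high => _ _; apply: permutes_query_idx.
Qed.

Definition neg_perm := perm_of permutes_neg.
Definition step_perm := (perm_of permutes_rot * perm_of permutes_inc)%g.
Definition apply_perm := perm_of permutes_apply.

Lemma neg_perm_register hi A : hi < 2 ^ (Mt + kappa) -> A < W ->
  natact neg_perm (hi * W + A) = hi * W + (W - A) %% W.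
Proof. by move=> hhi hA; rewrite perm_ofE ?register_lt ?map_lowE. Qed.

Lemma step_perm_state x c A : x < 2 ^ Mt -> c.+1 < 2 ^ kappa -> A < 2 ^ K1 ->
  natact step_perm (state x c A) = state x c.+1 (A * 2 ^ mstar).
Proof.
move=> hx hc hA; have hc' := ltnW hc.
have AW : A < W by rewrite (leq_trans hA) // leq_exp2l //; nia.
have AmW : A * 2 ^ mstar < W.
  by rewrite -[in W](prednK hkappa) mulnS expnD mulnC ltn_pmul2l ?expn_gt0.
rewrite natactM.
have -> : natact (perm_of permutes_rot) (state x c A) = state x c (A * 2 ^ mstar).
  by rewrite perm_ofE ?state_lt // /state map_lowE // modn_small // divn_small ?addn0.
by rewrite perm_ofE ?state_lt // /state map_highE // map_lowE // addn1 modn_small.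
Qed.

Lemma apply_perm_state x c A : x < 2 ^ Mt -> c < 2 ^ kappa -> A < W ->
  natact apply_perm (state x c A) = state (query_idx Qt (decoded_fun A) x) c A.
Proof. by move=> hx hc hA; rewrite perm_ofE ?state_lt // /state !map_highE. Qed.

Lemma neg_oracle_neg f : (neg_perm * oracle f * neg_perm)%g = (oracle f)^-1%g.
Proof.
apply/esym/eqP; rewrite eq_invg_mul; apply/eqP/natact_eq => n hn.
have hhi : n %/ W < 2 ^ (Mt + kappa).
  by rewrite ltn_divLR ?expn_gt0 // -expnD -[_ + _ + _]/(qm oracle_query).
have ltW y : y %% W < W by rewrite ltn_mod expn_gt0.
rewrite natact1 !natactM (divn_eq n W).
by rewrite !(oracle_register, neg_perm_register) // negmod_addmodK.
Qed.

Local Notation compute_perm f := ((oracle f * step_perm) ^+ kappa.-1 * oracle f)%g.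

Lemma compute_state f x j : x < 2 ^ Mt -> j < kappa ->
  natact ((oracle f * step_perm) ^+ j * oracle f)%g (state x 0 0)
  = state x j (acc f (queried_point x) j).
Proof.
move=> hx; elim: j => [|j IH] hj.
  by rewrite expg0 mul1g oracle_state ?expn_gt0 // add0n (modn_small (acc_lt_W _ _ hj)).
rewrite expgSr (mulgA _ (oracle f) step_perm) natactM natactM IH ?(ltnW hj) //.
rewrite step_perm_state ?counter_lt //; last first.
  by apply: (leq_trans (acc_lt _ _ _)); rewrite leq_exp2l //; nia.
have acc_W := acc_lt_W f (queried_point x) hj.
rewrite oracle_state ?counter_lt ?modn_small //; apply: leq_ltn_trans acc_W; exact: leq_addr.
Qed.

Lemma compute_apply_uncompute f x : x < 2 ^ Mt ->
  natact (compute_perm f * apply_perm * (compute_perm f)^-1)%g (state x 0 0)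
  = state (query_idx Qt (decoded_fun (acc f (queried_point x) kappa.-1)) x) 0 0.
Proof.
move=> hx; have hk : kappa.-1 < kappa by rewrite prednK.
rewrite natactM natactM compute_state // apply_perm_state ?counter_lt ?acc_lt_W //.
set g := decoded_fun _; have [idx_lt _] := permutes_query_idx hQt g.
by rewrite -(queried_point_query_idx g x) -compute_state ?idx_lt // natactK.
Qed.

Definition simulation_alg : qalg C D K :=
  perm_qalg C (compute_uncompute kappa step_perm apply_perm neg_perm) (2 * kappa).

Local Notation m := (m_alg simulation_alg).

Lemma simulation_alg_ket f g x (s := queried_point x) : x < 2 ^ Mt ->
  g s = rho s [tuple beta (f (eta j s)) | j < kappa] ->
  (qalg_op simulation_alg f *m ket C (2 ^ m) (x * 2 ^ (m - Mt)))%R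
  = ket C (2 ^ m) (query_idx Qt g x * 2 ^ (m - Mt)).
Proof.
move=> hx hg; change (m_alg simulation_alg) with (qm oracle_query).
rewrite -!state_x00 /qalg_op /simulation_alg (qalg_run_perm _ oracle_query_valid).
rewrite (interleave_compute_uncompute _ _ hkappa (neg_oracle_neg f)).
rewrite perm_mxV_ket ?state_lt ?expn_gt0 // compute_apply_uncompute //.
by rewrite (query_idx_ext (g := g)) // hg /decoded_fun decode_acc.
Qed.

End Construction.

Local Open Scope ring_scope.

Theorem lemma1 (C : numClosedFieldType)
  (D Dt K Kt : Type)
  (hD : inhabited D) (hDt : inhabited Dt) (hK : inhabited K) (hKt : inhabited Kt)
  (F : (D -> K) -> Prop) (Ft : (Dt -> Kt) -> Prop)
  (hF : exists f, F f) (hFt : exists g, Ft g)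
  (Gamma : (D -> K) -> (Dt -> Kt))
  (hGamma : forall f, F f -> Ft (Gamma f))
  (kappa mstar : nat) (hkappa : (0 < kappa)%N) (hmstar : (0 < mstar)%N)
  (eta : 'I_kappa -> Dt -> D) (beta : K -> nat)
  (hbeta : forall k, (beta k < 2 ^ mstar)%N)
  (rho : Dt -> kappa.-tuple nat -> Kt)
  (hrho : forall f, F f -> forall s : Dt,
      Gamma f s = rho s [tuple beta (f (eta j s)) | j < kappa]) :
  forall Qt : query Dt Kt, query_valid Qt ->
  exists B : qalg C D K,
    [/\ qalg_valid B,
        n_q B = (2 * kappa)%N,
        (qm Qt < m_alg B)%N &
        forall f, F f -> forall x, (x < 2 ^ qm Qt)%N ->
          pad0 (m_alg B) (query_op C Qt (Gamma f) *m ket C (2 ^ qm Qt) x)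
          = qalg_op B f *m ket C (2 ^ m_alg B) (x * 2 ^ (m_alg B - qm Qt))%N ].
Proof.
move=> Qt hQt.
exists (simulation_alg C mstar hkappa eta beta rho hQt); split.
- by apply: perm_qalg_valid; apply: oracle_query_valid.
- by [].
- by rewrite /m_alg /=; lia.
move=> f hf x hx.
have [idx_lt _] := permutes_query_idx hQt (Gamma f).
rewrite query_op_perm perm_mxV_ket // query_permE // pad0_ket ?idx_lt //.
by rewrite (simulation_alg_ket C hkappa hmstar hbeta hQt hx (hrho f hf _)).
Qed.
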